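(* Let $h,v$ be permutations of $\Lambda=\{1,\dots,d\}$ such that $\langle h,v\rangle$ acts transitively on $\Lambda$, and let $M\ge0$ be an integer. Then the combinatorial data $(\pi_0,\pi_1^M)$ is irreducible.
   Context: $\pi_0,\pi_1^M:\Lambda\times\{L,R\}\to\{1,\dots,2d\}$ are the bijections $\pi_0(\lambda,L)=2\lambda-1$, $\pi_0(\lambda,R)=2\lambda$, $\pi_1^M(\lambda,L)=2vh^M(\lambda)$, $\pi_1^M(\lambda,R)=2vh^{M+1}(\lambda)-1$. A pair of bijections $(\pi_0,\pi_1)$ from a $k$-element set $\mathcal{A}$ to $\{1,\dots,k\}$ is irreducible if there is no $1\le j<k$ with $\pi_0^{-1}(\{1,\dots,j\})=\pi_1^{-1}(\{1,\dots,j\})$. *)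

From HB Require Import structures.
From mathcomp Require Import all_boot all_fingroup.
Set Implicit Arguments. Unset Strict Implicit. Unset Printing Implicit Defensive.

(* The two sides L, R of an interval *)
Inductive side := L | R.
Definition side_to_bool (s : side) : bool := if s is R then true else false.
Definition bool_to_side (b : bool) : side := if b then R else L.
Lemma side_boolK : cancel side_to_bool bool_to_side. Proof. by case. Qed.
HB.instance Definition _ := Finite.copy side (can_type side_boolK).

Definition irreducible (A : finType) (p0 p1 : A -> nat) : Prop :=
  forall j : nat, 1 <= j < #|A| ->
    [set a | p0 a <= j] != [set a | p1 a <= j].

(* Lambda = {1,...,d} is represented by 'I_d; the ordinal i stands for i+1. *)
Definition pi0 (d : nat) (x : 'I_d * side) : nat :=
  let: (l, s) := x in
  match s with L => 2 * l.+1 - 1 | R => 2 * l.+1 end.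

Definition pi1 (d : nat) (h v : {perm 'I_d}) (M : nat) (x : 'I_d * side) : nat :=
  let: (l, s) := x in
  match s with
  | L => 2 * (v ((h ^+ M)%g l)).+1
  | R => 2 * (v ((h ^+ M.+1)%g l)).+1 - 1
  end.

(* Ordered by pi0, the endpoints 2l-1 < 2l of the intervals come interval by
   interval.  At a cut j = 2k + 1 the pi0-side contains the left endpoints of
   k + 1 intervals but only k whole intervals, so equality of the two cuts makes
   the permutation l |-> v (h^M l) map k + 1 labels into k labels.  At a cut
   j = 2k both sides consist of the first k intervals, so l |-> v (h^M l) and
   l |-> v (h^(M+1) l) stabilise them; then so do h and v, which contradicts
   transitivity as 0 < k < d. *)

From mathcomp Require Import all_boot all_fingroup.
From mathcomp Require Import zify.

Set Implicit Arguments.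
Unset Strict Implicit.
Unset Printing Implicit Defensive.

Lemma card_side : #|{: side}| = 2.
Proof.
rewrite -card_bool; apply: bij_eq_card.
by exists bool_to_side; [exact: side_boolK | case].
Qed.

Lemma card_ord_side d : #|{: 'I_d * side}| = (2 * d)%N.
Proof. by rewrite card_prod card_ord card_side mulnC. Qed.

Lemma perm_imset_not_proper (T : finType) (p : {perm T}) (B C : {set T}) :
  C \proper B -> ~~ (p @: B \subset C).
Proof.
move=> ltCB; apply/negP => /subset_leq_card.
rewrite card_imset; last exact: perm_inj.
by move/(leq_trans (proper_card ltCB)); rewrite ltnn.
Qed.

Lemma atrans_acts_setT (T : finType) (G : {group {perm T}}) (A : {set T}) x :
  [transitive G, on [set: T] | 'P] -> [acts G, on A | 'P] -> x \in A ->
  A = [set: T].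
Proof.
move=> trG actsA Ax; apply/eqP; rewrite eqEsubset subsetT.
by rewrite -(atransP trG x (in_setT x)) acts_sub_orbit.
Qed.

Section GenPowers.

Local Open Scope group_scope.

Lemma gen_subG_powM (gT : finGroupType) (H : {group gT}) (h v : gT) M :
  h ^+ M * v \in H -> h ^+ M.+1 * v \in H -> <<[set h; v]>> \subset H.
Proof.
move=> Hg Hg'.
have Hh : h \in H.
  have -> : h = h ^+ M.+1 * v * (h ^+ M * v)^-1.
    by rewrite invMg mulgA mulgK expgS mulgK.
  by rewrite groupM ?groupV.
have Hv : v \in H by rewrite -(mulKg (h ^+ M) v) groupM ?groupV ?groupX.
by rewrite gen_subG; apply/subsetP => x; rewrite in_set2 => /orP[]/eqP->.
Qed.

End GenPowers.

Section Cuts.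

Variables (d : nat) (h v : {perm 'I_d}) (M k : nat).

Lemma pi0L_le_odd (l : 'I_d) : (pi0 (l, L) <= (2 * k).+1) = (l <= k).
Proof. by rewrite /=; lia. Qed.

Lemma pi1L_le_odd (l : 'I_d) :
  (pi1 h v M (l, L) <= (2 * k).+1) = ((h ^+ M * v)%g l < k).
Proof. by rewrite /= permM; lia. Qed.

Lemma pi0_le_double (l : 'I_d) s : (pi0 (l, s) <= 2 * k) = (l < k).
Proof. by case: s => /=; lia. Qed.

Lemma pi1L_le_double (l : 'I_d) :
  (pi1 h v M (l, L) <= 2 * k) = ((h ^+ M * v)%g l < k).
Proof. by rewrite /= permM; lia. Qed.

Lemma pi1R_le_double (l : 'I_d) :
  (pi1 h v M (l, R) <= 2 * k) = ((h ^+ M.+1 * v)%g l < k).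
Proof. by rewrite /= permM; lia. Qed.

Lemma pi_cuts_differ_odd : k < d ->
  [set x | pi0 x <= (2 * k).+1] != [set x | pi1 h v M x <= (2 * k).+1].
Proof.
move=> ltkd; apply/negP => /eqP/setP cuts_eq.
pose B := [set l : 'I_d | l <= k]; pose C := [set l : 'I_d | l < k].
have ltCB : C \proper B.
  apply/properP; split; first by apply/subsetP => l; rewrite !inE; apply: ltnW.
  by exists (Ordinal ltkd); rewrite !inE /= ?leqnn ?ltnn.
apply: (negP (perm_imset_not_proper (h ^+ M * v)%g ltCB)).
apply/subsetP => _ /imsetP[l Bl ->].
by move: Bl (cuts_eq (l, L)); rewrite !inE pi0L_le_odd pi1L_le_odd => -> <-.
Qed.

Lemma pi_cuts_differ_even :
  [transitive <<[set h; v]>>, on [set: 'I_d] | 'P] -> 0 < k < d ->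
  [set x | pi0 x <= 2 * k] != [set x | pi1 h v M x <= 2 * k].
Proof.
move=> trG /andP[k_gt0 ltkd]; apply/negP => /eqP/setP cuts_eq.
pose A := [set l : 'I_d | l < k].
have stabA s (p : {perm 'I_d}) :
    (forall l, (pi1 h v M (l, s) <= 2 * k) = (p l < k)) -> p \in 'N(A | 'P)%g.
  move=> pi1_le; apply/astabsP => l; rewrite !inE /aperm -pi1_le.
  by move: (cuts_eq (l, s)); rewrite !inE pi0_le_double.
have actsA : [acts <<[set h; v]>>%g, on A | 'P].
  by apply: gen_subG_powM; [apply: (stabA L) | apply: (stabA R)];
    [exact: pi1L_le_double | exact: pi1R_le_double].
have A0 : Ordinal (leq_ltn_trans (leq0n k) ltkd) \in A by rewrite inE.
have /setP/(_ (Ordinal ltkd)) := atrans_acts_setT trG actsA A0.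
by rewrite !inE ltnn.
Qed.

End Cuts.

Theorem corollary5p3 (d : nat) (h v : {perm 'I_d}) (M : nat) :
  [transitive <<[set h; v]>>, on [set: 'I_d] | 'P] ->
  irreducible (pi0 (d:=d)) (pi1 h v M).
Proof.
move=> trG j; rewrite card_ord_side -[j](odd_double_half j) -mul2n.
case: (odd j) => /andP[j_gt0 j_lt].
- by rewrite add1n; apply: pi_cuts_differ_odd; lia.
- by rewrite add0n; apply: pi_cuts_differ_even => //; lia.
Qed.
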